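(* Suppose the internal state of target $i$ is scalar ($L_i=1$). Then, for fixed $\rho$ with $g_i(\|\Omega_{i,ss}\|)<\rho<g_i(\|\Omega_i^\infty\|)$, the function $T\mapsto\frac{\partial\beta_i(\rho,T)}{\partial T}$ is strictly positive and increasing.
   Context: Target $i$ has scalar state with $\dot\phi_i=A_i\phi_i+B_iu_i+w_i$, $w_i$ white Gaussian with variance $Q_i>0$, observations $z_i=H_i\phi_i+v_i$ with $v_i\sim\mathcal N(0,R_i)$, $R_i>0$, $H_i\neq0$, and $G_i=H_i^2/R_i$. Its error variance obeys $\dot\Omega_i=2A_i\Omega_i+Q_i-\eta_i(t)G_i\Omega_i^2$, $\eta_i(t)\in\{0,1\}$. Under a periodic schedule of period $T$ in which the target is observed for one interval of length $t_{\text{on},i}$ and unobserved for $t_{\text{off},i}=T-t_{\text{on},i}$, let $\overline P_i(t_{\text{on},i},t_{\text{off},i})$ be the value of the $T$-periodic steady-state solution at the start of the observation interval. $\Omega_{i,ss}$ is the positive solution of $2A_i\Omega+Q_i-G_i\Omega^2=0$, and $\Omega_i^\infty=\lim_{t\to\infty}\int_0^te^{2A_i\gamma}Q_i\,d\gamma$ (the limiting variance if never observed; $+\infty$ if $A_i\ge0$). $g_i$ is strictly increasing with $g_i(0)=0$, $g_i(x)\to\infty$, and $\|\cdot\|$ is a norm. For $T>0$ and $g_i(\|\Omega_{i,ss}\|)\le\rho\le g_i(\|\Omega_i^\infty\|)$, $\beta_i(\rho,T)\in[0,T]$ denotes the dwell time $t_{\text{on},i}$ for which $g_i(\|\overline P_i(\beta_i(\rho,T),T-\beta_i(\rho,T))\|)=\rho$.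 Standing assumption: for $\rho$ strictly between these bounds, $\beta_i(\rho,T)$ is differentiable with respect to $T$. *)

From Stdlib Require Import Reals.
From Coquelicot Require Import Coquelicot.
Open Scope R_scope.

Definition is_norm (nrm : R -> R) : Prop :=
  (forall x, 0 <= nrm x) /\
  (forall x, nrm x = 0 -> x = 0) /\
  (forall a x, nrm (a * x) = Rabs a * nrm x) /\
  (forall x y, nrm (x + y) <= nrm x + nrm y).

Definition is_gfun (g : R -> R) : Prop :=
  (forall x y, 0 <= x -> x < y -> g x < g y) /\
  g 0 = 0 /\
  is_lim g p_infty p_infty.

Definition Gi (H Rv : R) : R := H ^ 2 / Rv.

(* Omega_i^oo = lim_{t->oo} int_0^t e^{2 A gamma} Q d gamma  (in Rbar; +oo if A >= 0). *)
Definition Omega_inf (A Q : R) : Rbar :=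
  Lim (fun t => RInt (fun s => exp (2 * A * s) * Q) 0 t) p_infty.

Definition g_norm_bar (g nrm : R -> R) (x : Rbar) : Rbar :=
  match x with
  | Finite w => Finite (g (nrm w))
  | _ => p_infty
  end.

(* Om is a (positive, continuous) T-periodic solution, T = ton + toff, of
   dOm/dt = 2 A Om + Q - eta(t) G Om^2, where eta = 1 on [kT, kT + ton)
   (observation interval) and eta = 0 on [kT + ton, (k+1) T). The ODE is
   required on the open subintervals; Om is continuous across switches. *)
Definition periodic_sol (A Q G ton toff : R) (Om : R -> R) : Prop :=
  let T := ton + toff in
  (forall t, 0 < Om t) /\
  (forall t, continuous Om t) /\
  (forall t, Om (t + T) = Om t) /\
  (forall (k : Z) t, IZR k * T < t < IZR k * T + ton ->
      is_derive Om t (2 * A * Om t + Q - G * (Om t) ^ 2)) /\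
  (forall (k : Z) t, IZR k * T + ton < t < IZR k * T + T ->
      is_derive Om t (2 * A * Om t + Q)).

(* Pbar(ton, toff) = value of the periodic steady-state solution at the start
   of the observation interval (time 0). *)
Definition is_Pbar (A Q G ton toff p : R) : Prop :=
  exists Om, periodic_sol A Q G ton toff Om /\ Om 0 = p.

(* b = beta(rho, T): dwell time in [0,T] with g(||Pbar(b, T - b)||) = rho. *)
Definition is_beta (A Q G : R) (g nrm : R -> R) (rho T b : R) : Prop :=
  0 <= b <= T /\
  exists p, is_Pbar A Q G b (T - b) p /\ g (nrm p) = rho.

From Stdlib Require Import Reals Psatz.
From Coquelicot Require Import Coquelicot.
Open Scope R_scope.

(* With a scalar state, [g] composed with the norm is strictly increasing on [0, +oo), so the
   level [rho] forces [Pbar (beta T, T - beta T)] to be one value [p] for every [T], with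
   [Omega_ss < p] and [0 < 2 A p + Q] (the latter from [p < Omega^oo]).  On the periodic solution
   through [p] the observed phase runs the Riccati flow [v] from [p] for a time [beta T], and the
   unobserved phase runs [W' = 2 A W + Q] back to [p]; with [u] the affine flow run backwards from
   [p], this reads [v (beta T) = u (T - beta T)].  Differentiating in [T] with [w = u (T - beta T)]
   gives [beta' G w^2 = 2 A w + Q], so [0 < beta' < 1] because [v] stays above the steady state.
   Hence [T - beta T] increases, [w] decreases, and [beta' = (2 A w + Q) / (G w^2)], a decreasing
   function of [w], increases. *)

Lemma is_derive_zero_const (f : R -> R) x y : x <= y ->
  (forall t, x < t < y -> is_derive f t 0) ->
  (forall t, x <= t <= y -> continuous f t) -> f x = f y.
Proof.
  intros Hxy Hd Hc.
  destruct (MVT_gen f x y (fun _ => 0)) as [z [_ Hz]];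
    rewrite ?Rmin_left, ?Rmax_right by lra.
  - exact Hd.
  - intros t Ht; apply continuity_pt_filterlim, Hc, Ht.
  - lra.
Qed.

Lemma is_derive_linear_exp (f : R -> R) k x y : x <= y ->
  (forall t, x < t < y -> is_derive f t (k * f t)) ->
  (forall t, x <= t <= y -> continuous f t) -> f y = f x * exp (k * (y - x)).
Proof.
  intros Hxy Hd Hc.
  assert (E : f x * exp (- k * x) = f y * exp (- k * y)).
  { apply (is_derive_zero_const (fun t => f t * exp (- k * t))); [exact Hxy | |].
    - intros t Ht; specialize (Hd t Ht).
      auto_derive; [eexists; exact Hd |].
      rewrite (is_derive_unique (fun s : R => f s) _ _ Hd); ring.
    - intros t Ht; apply (continuous_mult f (fun t => exp (- k * t))); [now apply Hc |].
      apply continuous_exp_comp, (continuous_mult (fun _ => - k) (fun t => t)).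
      + apply continuous_const.
      + apply continuous_id. }
  replace (f y) with (f y * exp (- k * y) * exp (k * y))
    by (rewrite Rmult_assoc, <- exp_plus;
        replace (- k * y + k * y) with 0 by ring; rewrite exp_0; ring).
  rewrite <- E, Rmult_assoc, <- exp_plus; f_equal; f_equal; ring.
Qed.

Lemma exp_le_1 x : x <= 0 -> exp x <= 1.
Proof.
  intros Hx; rewrite <- exp_0.
  destruct (Req_dec x 0) as [-> | Hx0]; [lra | left; apply exp_increasing; lra].
Qed.

(* The solution of [W' = - G (W - a) (W - c)] with [W 0 = p]: the ratio [(W - a) / (W - c)]
   decays like [exp (- G (a - c) t)]. *)
Definition riccati_flow (a c G p t : R) : R :=
  let r := (p - a) / (p - c) * exp (- (G * (a - c)) * t) in (a - c * r) / (1 - r).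

Lemma riccati_flow_spec a c G p t : 0 < G -> c < a < p -> 0 <= t ->
  is_derive (riccati_flow a c G p) t
    (- G * (riccati_flow a c G p t - a) * (riccati_flow a c G p t - c)) /\
  a < riccati_flow a c G p t.
Proof.
  intros HG Hac Ht.
  assert (Hr : 0 < (p - a) / (p - c) < 1).
  { split; [apply Rdiv_lt_0_compat; lra |].
    apply (Rmult_lt_reg_r (p - c)); [lra |]. field_simplify; lra. }
  assert (HX : 0 < exp (- (G * (a - c)) * t) <= 1).
  { split; [apply exp_pos | apply exp_le_1].
    assert (0 <= G * (a - c) * t) by (apply Rmult_le_pos; [apply Rmult_le_pos |]; lra).
    lra. }
  unfold riccati_flow; cbv zeta.
  set (r := (p - a) / (p - c)) in *; set (X := exp (- (G * (a - c)) * t)) in *.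
  assert (HrX : 0 < r * X < 1) by (split; [apply Rmult_lt_0_compat | nra]; lra).
  split.
  - auto_derive; fold X; [lra | field; lra].
  - apply (Rmult_lt_reg_r (1 - r * X)); [lra |]. field_simplify; nra.
Qed.

Lemma riccati_flow_drift A Q G a c p t : 0 < G -> c < a < p -> 0 <= t ->
  (forall x, G * (x - a) * (x - c) = G * x ^ 2 - 2 * A * x - Q) ->
  let w := riccati_flow a c G p t in
  is_derive (riccati_flow a c G p) t (2 * A * w + Q - G * w ^ 2) /\ a < w /\
  2 * A * w + Q - G * w ^ 2 < 0.
Proof.
  intros HG Hac Ht Hfact w.
  destruct (riccati_flow_spec a c G p t HG Hac Ht) as [Hd Hw]; fold w in Hd, Hw.
  specialize (Hfact w).
  assert (0 < G * (w - a) * (w - c))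
    by (apply Rmult_lt_0_compat; [apply Rmult_lt_0_compat |]; lra).
  split; [| split; lra].
  replace (2 * A * w + Q - G * w ^ 2) with (- G * (w - a) * (w - c)) by lra; exact Hd.
Qed.

Lemma riccati_other_root A Q G a : 0 < G -> 0 < Q -> 0 < a -> 2 * A * a + Q - G * a ^ 2 = 0 ->
  - Q / (G * a) < 0 /\
  forall x, G * (x - a) * (x - - Q / (G * a)) = G * x ^ 2 - 2 * A * x - Q.
Proof.
  intros HG HQ Ha Hroot; split.
  - apply Ropp_lt_cancel; rewrite Ropp_0, <- Rdiv_opp_l, Ropp_involutive.
    apply Rdiv_lt_0_compat; [| apply Rmult_lt_0_compat]; assumption.
  - assert (HA : 2 * A = G * a - Q / a) by (apply (Rmult_eq_reg_r a); [field_simplify; lra | lra]).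
    intros x; rewrite HA; field; lra.
Qed.

Lemma riccati_flow_unique a c G (W : R -> R) b : c < a -> 0 <= b ->
  (forall t, 0 <= t <= b -> c < W t) -> (forall t, 0 <= t <= b -> continuous W t) ->
  (forall t, 0 < t < b -> is_derive W t (- G * (W t - a) * (W t - c))) ->
  W b = riccati_flow a c G (W 0) b.
Proof.
  intros Hac Hb Hc Hcont Hd.
  set (r t := (W t - a) / (W t - c)).
  assert (Hr : r b = r 0 * exp (- (G * (a - c)) * (b - 0))).
  { apply is_derive_linear_exp; [exact Hb | |].
    - intros t Ht; specialize (Hc t ltac:(lra)); unfold r.
      auto_derive; [repeat split; try (eexists; apply Hd); lra |].
      rewrite (is_derive_unique (fun s : R => W s) _ _ (Hd t Ht)); field; lra.
    - intros t Ht; specialize (Hc t Ht); unfold r.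
      apply (continuous_mult (fun t => W t - a)).
      + apply (continuous_minus W); [now apply Hcont | apply continuous_const].
      + apply continuous_Rinv_comp; [| lra].
        apply (continuous_minus W); [now apply Hcont | apply continuous_const]. }
  rewrite Rminus_0_r in Hr.
  unfold riccati_flow; cbv zeta; fold (r 0); rewrite <- Hr.
  specialize (Hc b ltac:(lra)); unfold r.
  field; split; lra.
Qed.

(* The solution of [W' = 2 A W + Q] with [W 0 = p], evaluated at time [- s]. *)
Definition affine_flow_back (A Q p s : R) : R :=
  if Req_dec_T A 0 then p - Q * s
  else (p + Q / (2 * A)) * exp (- (2 * A) * s) - Q / (2 * A).

Lemma affine_flow_back_spec A Q p s : 0 < 2 * A * p + Q ->
  is_derive (affine_flow_back A Q p) s (- (2 * A * affine_flow_back A Q p s + Q)) /\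
  0 < 2 * A * affine_flow_back A Q p s + Q.
Proof.
  intros Hp; unfold affine_flow_back; destruct (Req_dec_T A 0) as [-> | HA].
  - split; [auto_derive; [exact I | ring] | lra].
  - split; [auto_derive; [exact I | field; exact HA] |].
    replace (2 * A * ((p + Q / (2 * A)) * exp (- (2 * A) * s) - Q / (2 * A)) + Q)
      with ((2 * A * p + Q) * exp (- (2 * A) * s)) by (field; exact HA).
    apply Rmult_lt_0_compat; [exact Hp | apply exp_pos].
Qed.

Lemma affine_flow_back_unique A Q (W : R -> R) x y : x <= y ->
  (forall t, x <= t <= y -> continuous W t) ->
  (forall t, x < t < y -> is_derive W t (2 * A * W t + Q)) ->
  W x = affine_flow_back A Q (W y) (y - x).
Proof.
  intros Hxy Hc Hd; unfold affine_flow_back; destruct (Req_dec_T A 0) as [-> | HA].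
  - enough (W x - Q * x = W y - Q * y) by lra.
    apply (is_derive_zero_const (fun t => W t - Q * t)); [exact Hxy | |].
    + intros t Ht; specialize (Hd t Ht).
      auto_derive; [eexists; exact Hd |].
      rewrite (is_derive_unique (fun s : R => W s) _ _ Hd); ring.
    + intros t Ht; apply (continuous_minus W (fun t => Q * t)); [now apply Hc |].
      apply (continuous_mult (fun _ => Q) (fun t => t));
        [apply continuous_const | apply continuous_id].
  - set (q := Q / (2 * A)).
    assert (E : W y + q = (W x + q) * exp (2 * A * (y - x))).
    { apply (is_derive_linear_exp (fun t => W t + q)); [exact Hxy | |].
      - intros t Ht; specialize (Hd t Ht).
        auto_derive; [eexists; exact Hd |].
        rewrite (is_derive_unique (fun s : R => W s) _ _ Hd); unfold q; field; exact HA.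
      - intros t Ht; apply (continuous_plus W (fun _ => q));
          [now apply Hc | apply continuous_const]. }
    rewrite E, Rmult_assoc, <- exp_plus.
    replace (2 * A * (y - x) + - (2 * A) * (y - x)) with 0 by ring.
    rewrite exp_0; ring.
Qed.

Lemma periodic_sol_match A Q G a c ton toff (W : R -> R) :
  c < 0 -> c < a -> (forall x, G * (x - a) * (x - c) = G * x ^ 2 - 2 * A * x - Q) ->
  0 <= ton -> 0 <= toff -> periodic_sol A Q G ton toff W ->
  W ton = riccati_flow a c G (W 0) ton /\
  W ton = affine_flow_back A Q (W 0) toff.
Proof.
  intros Hc Hac Hfact Hon0 Hoff0 [Hpos [Hcont [Hper [Hon Hoff]]]].
  split.
  - apply riccati_flow_unique; [exact Hac | exact Hon0 | | now intros |].
    + intros t _; specialize (Hpos t); lra.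
    + intros t Ht; specialize (Hfact (W t)).
      replace (- G * (W t - a) * (W t - c)) with (2 * A * W t + Q - G * W t ^ 2) by lra.
      apply (Hon 0%Z); simpl; lra.
  - replace (W 0) with (W (ton + toff)) by (rewrite <- (Hper 0); f_equal; ring).
    replace toff with (ton + toff - ton) at 2 by ring.
    apply affine_flow_back_unique; [lra | now intros |].
    intros t Ht; apply (Hoff 0%Z); simpl; lra.
Qed.

Definition dwell_rate (A Q G w : R) : R := (2 * A * w + Q) / (G * w ^ 2).

Lemma dwell_rate_decreasing A Q G w1 w2 : 0 < G -> 0 < Q ->
  0 < w2 < w1 -> 0 < 2 * A * w2 + Q -> dwell_rate A Q G w1 < dwell_rate A Q G w2.
Proof.
  intros HG HQ Hw Hdrift; unfold dwell_rate.
  assert (0 < w1 ^ 2 /\ 0 < w2 ^ 2) as [] by (split; apply pow_lt; lra).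
  apply (Rmult_lt_reg_r (G * w1 ^ 2 * (G * w2 ^ 2)));
    [apply Rmult_lt_0_compat; apply Rmult_lt_0_compat; lra |].
  field_simplify; [| lra | lra].
  (* The cleared difference is [G (w1 - w2) (w1 (2 A w2 + Q) + Q w2)]. *)
  assert (0 < (w1 - w2) * (w1 * (2 * A * w2 + Q) + Q * w2)).
  { apply Rmult_lt_0_compat; [lra |].
    assert (0 < w1 * (2 * A * w2 + Q)) by (apply Rmult_lt_0_compat; lra).
    assert (0 < Q * w2) by (apply Rmult_lt_0_compat; lra). lra. }
  nra.
Qed.

Section DwellTimeDerivative.

Variables (A Q G : R) (v u beta : R -> R).
Hypotheses (HG : 0 < G) (HQ : 0 < Q).
Hypothesis v_deriv : forall b, 0 <= b -> is_derive v b (2 * A * v b + Q - G * v b ^ 2).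
Hypothesis v_pos : forall b, 0 <= b -> 0 < v b.
Hypothesis v_drift_neg : forall b, 0 <= b -> 2 * A * v b + Q - G * v b ^ 2 < 0.
Hypothesis u_deriv : forall s, is_derive u s (- (2 * A * u s + Q)).
Hypothesis u_drift_pos : forall s, 0 < 2 * A * u s + Q.
Hypothesis beta_range : forall T, 0 < T -> 0 <= beta T <= T.
Hypothesis beta_match : forall T, 0 < T -> v (beta T) = u (T - beta T).
Hypothesis beta_derivable : forall T, 0 < T -> ex_derive beta T.

Lemma Derive_beta_balance T : 0 < T ->
  Derive beta T * (G * u (T - beta T) ^ 2) = 2 * A * u (T - beta T) + Q.
Proof.
  intros HT; destruct (beta_range T HT) as [Hb _].
  assert (Hbeta : is_derive beta T (Derive beta T)) by now apply Derive_correct, beta_derivable.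
  set (D := Derive beta T) in *.
  assert (Hon : is_derive (fun t => v (beta t)) T
                  (D * (2 * A * v (beta T) + Q - G * v (beta T) ^ 2)))
    by exact (is_derive_comp v beta T _ _ (v_deriv _ Hb) Hbeta).
  assert (Hoff : is_derive (fun t => u (t - beta t)) T
                   ((1 - D) * - (2 * A * u (T - beta T) + Q))).
  { apply (is_derive_comp u (fun t => t - beta t)); [apply u_deriv |].
    apply (is_derive_minus (fun t => t) beta);
      [apply (is_derive_id (K := R_AbsRing)) | exact Hbeta]. }
  assert (Hon' : is_derive (fun t => u (t - beta t)) T
                   (D * (2 * A * v (beta T) + Q - G * v (beta T) ^ 2))).
  { apply (is_derive_ext_loc (fun t => v (beta t))); [| exact Hon].
    apply (filter_imp (fun t => 0 < t)); [exact beta_match | exact (open_gt 0 T HT)]. }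
  pose proof (is_derive_unique _ _ _ Hoff) as E; rewrite (is_derive_unique _ _ _ Hon') in E.
  rewrite beta_match in E by exact HT.
  lra.
Qed.

Lemma Derive_beta_rate T : 0 < T ->
  Derive beta T = dwell_rate A Q G (u (T - beta T)) /\ 0 < u (T - beta T).
Proof.
  intros HT; destruct (beta_range T HT) as [Hb _].
  assert (Hw : 0 < u (T - beta T)) by (rewrite <- beta_match by exact HT; now apply v_pos).
  split; [| exact Hw].
  assert (0 < G * u (T - beta T) ^ 2) by (apply Rmult_lt_0_compat; [| apply pow_lt]; lra).
  unfold dwell_rate; rewrite <- (Derive_beta_balance T HT); field; lra.
Qed.

Lemma Derive_beta_pos T : 0 < T -> 0 < Derive beta T.
Proof.
  intros HT; destruct (Derive_beta_rate T HT) as [-> Hw]; unfold dwell_rate.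
  apply Rdiv_lt_0_compat; [apply u_drift_pos | apply Rmult_lt_0_compat; [| apply pow_lt]; lra].
Qed.

Lemma Derive_beta_lt_1 T : 0 < T -> Derive beta T < 1.
Proof.
  intros HT; destruct (beta_range T HT) as [Hb _].
  pose proof (Derive_beta_balance T HT) as E.
  pose proof (v_drift_neg _ Hb) as Hneg; rewrite beta_match in Hneg by exact HT.
  assert (0 < G * u (T - beta T) ^ 2)
    by (apply Rmult_lt_0_compat; [| apply pow_lt, (Derive_beta_rate T HT)]; lra).
  nra.
Qed.

Lemma off_time_increasing T1 T2 : 0 < T1 -> T1 < T2 -> T1 - beta T1 < T2 - beta T2.
Proof.
  intros HT1 HT12.
  apply (incr_function (fun t => t - beta t) 0 p_infty (fun t => 1 - Derive beta t));
    simpl; [| | exact HT1 | exact HT12 | exact I].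
  - intros t Ht _; apply (is_derive_minus (fun t => t) beta);
      [apply (is_derive_id (K := R_AbsRing)) | now apply Derive_correct, beta_derivable].
  - intros t Ht _; pose proof (Derive_beta_lt_1 t Ht); lra.
Qed.

Lemma u_decreasing s1 s2 : s1 < s2 -> u s2 < u s1.
Proof.
  intros Hs; apply Ropp_lt_cancel.
  apply (incr_function (fun s => - u s) m_infty p_infty (fun s => 2 * A * u s + Q));
    simpl; [| | exact I | exact Hs | exact I].
  - intros s _ _; rewrite <- (Ropp_involutive (2 * A * u s + Q)).
    exact (is_derive_opp u s _ (u_deriv s)).
  - intros s _ _; apply u_drift_pos.
Qed.

Lemma Derive_beta_increasing T1 T2 : 0 < T1 -> T1 < T2 -> Derive beta T1 < Derive beta T2.
Proof.
  intros HT1 HT12.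
  destruct (Derive_beta_rate T1 HT1) as [-> Hw1].
  destruct (Derive_beta_rate T2 ltac:(lra)) as [-> Hw2].
  apply dwell_rate_decreasing; [exact HG | exact HQ | | apply u_drift_pos].
  split; [exact Hw2 | apply u_decreasing, off_time_increasing; assumption].
Qed.

End DwellTimeDerivative.

Lemma is_norm_scalar nrm x : is_norm nrm -> nrm x = Rabs x * nrm 1.
Proof. intros (_ & _ & Hhom & _); rewrite <- Hhom, Rmult_1_r; reflexivity. Qed.

Lemma is_norm_one_pos nrm : is_norm nrm -> 0 < nrm 1.
Proof.
  intros (Hnn & Hdef & _); destruct (Hnn 1) as [| H1]; [assumption |].
  symmetry in H1; apply Hdef in H1; lra.
Qed.

Section GNormMonotone.

Variables (g nrm : R -> R).
Hypotheses (Hnrm : is_norm nrm) (Hg : is_gfun g).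

Lemma g_norm_increasing x y : 0 <= x < y -> g (nrm x) < g (nrm y).
Proof.
  intros Hxy; pose proof (is_norm_one_pos _ Hnrm).
  rewrite (is_norm_scalar nrm x), (is_norm_scalar nrm y), !Rabs_right by (assumption || lra).
  destruct Hg as [Hinc _]; apply Hinc; nra.
Qed.

Lemma g_norm_lt_reg x y : 0 <= x -> 0 <= y -> g (nrm x) < g (nrm y) -> x < y.
Proof.
  intros Hx Hy Hlt; destruct (Rtotal_order x y) as [| [-> | Hyx]]; [assumption | lra |].
  pose proof (g_norm_increasing y x (conj Hy Hyx)); lra.
Qed.

Lemma g_norm_inj x y : 0 <= x -> 0 <= y -> g (nrm x) = g (nrm y) -> x = y.
Proof.
  intros Hx Hy Heq; destruct (Rtotal_order x y) as [Hxy | [| Hyx]]; [| assumption |].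
  - pose proof (g_norm_increasing x y (conj Hx Hxy)); lra.
  - pose proof (g_norm_increasing y x (conj Hy Hyx)); lra.
Qed.

End GNormMonotone.

Lemma is_beta_match A Q G a c g nrm rho p T b :
  c < 0 -> c < a -> (forall x, G * (x - a) * (x - c) = G * x ^ 2 - 2 * A * x - Q) ->
  is_norm nrm -> is_gfun g -> 0 < p -> g (nrm p) = rho ->
  is_beta A Q G g nrm rho T b ->
  riccati_flow a c G p b = affine_flow_back A Q p (T - b).
Proof.
  intros Hc Hac Hfact Hnrm Hg Hp Hrho [Hb (q & (W & HW & HW0) & Hq)].
  assert (q = p) as <-.
  { apply (g_norm_inj g nrm);
      [assumption | assumption | rewrite <- HW0; left; apply HW | lra | congruence]. }
  destruct (periodic_sol_match A Q G a c b (T - b) W) as [Hon Hoff];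
    [assumption .. | lra | lra | exact HW |].
  rewrite <- HW0; congruence.
Qed.

Lemma Omega_inf_neg A Q : A < 0 -> Omega_inf A Q = Finite (- Q / (2 * A)).
Proof.
  intros HA; unfold Omega_inf; set (q := Q / (2 * A)).
  assert (Hint : forall t, q * exp (2 * A * t) - q = RInt (fun s => exp (2 * A * s) * Q) 0 t).
  { intros t; symmetry; apply is_RInt_unique.
    replace (q * exp (2 * A * t) - q)
      with (minus ((fun s => q * exp (2 * A * s)) t) ((fun s => q * exp (2 * A * s)) 0))
      by (unfold minus, plus, opp; simpl; rewrite Rmult_0_r, exp_0; ring).
    apply (is_RInt_derive (fun s => q * exp (2 * A * s)) (fun s => exp (2 * A * s) * Q));
      intros s _.
    - auto_derive; [exact I | unfold q; field; lra].
    - apply (ex_derive_continuous (fun s => exp (2 * A * s) * Q)); auto_derive; exact I. }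
  rewrite (Lim_ext _ _ _ Hint); apply is_lim_unique.
  assert (Hexp : is_lim (fun t => exp (2 * A * t + 0)) p_infty 0).
  { apply is_lim_comp_lin; [| lra].
    replace (Rbar_plus (Rbar_mult (2 * A) p_infty) 0) with m_infty; [exact is_lim_exp_m |].
    simpl; destruct (Rle_dec 0 (2 * A)); [exfalso; lra | reflexivity]. }
  replace (- Q / (2 * A)) with (q * 0 - q) by (unfold q; field; lra).
  assert (Hq : is_lim (fun t => q * exp (2 * A * t)) p_infty (q * 0)).
  { apply (is_lim_ext (fun t => q * exp (2 * A * t + 0)));
      [intros t; rewrite Rplus_0_r; reflexivity |].
    exact (is_lim_scal_l _ q _ _ Hexp). }
  exact (is_lim_minus' _ _ _ _ _ Hq (is_lim_const q p_infty)).
Qed.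

Lemma affine_drift_pos A Q g nrm p : 0 < Q -> is_norm nrm -> is_gfun g -> 0 < p ->
  Rbar_lt (g (nrm p)) (g_norm_bar g nrm (Omega_inf A Q)) -> 0 < 2 * A * p + Q.
Proof.
  intros HQ Hnrm Hg Hp Hlt; destruct (Rlt_or_le A 0) as [HA | HA]; [| nra].
  rewrite (Omega_inf_neg A Q HA) in Hlt; simpl in Hlt.
  set (q := - Q / (2 * A)) in Hlt.
  assert (Hq : q * (2 * A) = - Q) by (unfold q; field; lra).
  assert (p < q) by (apply (g_norm_lt_reg g nrm); [assumption .. | lra | nra | exact Hlt]).
  nra.
Qed.

Theorem lemma7 (A Q H Rv : R) (g nrm : R -> R) (Oss rho : R) (beta : R -> R) :
  0 < Q -> 0 < Rv -> H <> 0 ->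
  is_norm nrm -> is_gfun g ->
  (* Oss = Omega_{i,ss}, the positive root of 2 A W + Q - G W^2 = 0 *)
  0 < Oss -> 2 * A * Oss + Q - Gi H Rv * Oss ^ 2 = 0 ->
  (* g(||Omega_ss||) < rho < g(||Omega^oo||) *)
  g (nrm Oss) < rho ->
  Rbar_lt (Finite rho) (g_norm_bar g nrm (Omega_inf A Q)) ->
  (* beta T = beta_i(rho, T) for every T > 0 *)
  (forall T, 0 < T -> is_beta A Q (Gi H Rv) g nrm rho T (beta T)) ->
  (* standing assumption: differentiability in T *)
  (forall T, 0 < T -> ex_derive beta T) ->
  (forall T, 0 < T -> 0 < Derive beta T) /\
  (forall T1 T2, 0 < T1 -> T1 < T2 -> Derive beta T1 < Derive beta T2).
Proof.
  intros HQ HRv HH Hnrm Hg HOss Hss Hlow Hhigh Hbeta Hderiv.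
  set (G := Gi H Rv) in *.
  assert (HG : 0 < G) by (apply Rdiv_lt_0_compat; [apply pow2_gt_0 |]; assumption).
  destruct (Hbeta 1 Rlt_0_1) as [_ (p & (W1 & [HW1 _] & HW10) & Hp)].
  assert (Hp0 : 0 < p) by (rewrite <- HW10; apply HW1).
  assert (HOssp : Oss < p) by (apply (g_norm_lt_reg g nrm); [assumption .. | lra | lra | lra]).
  assert (Hdrift : 0 < 2 * A * p + Q)
    by (apply (affine_drift_pos A Q g nrm); [assumption .. | rewrite Hp; exact Hhigh]).
  destruct (riccati_other_root A Q G Oss HG HQ HOss Hss) as [Hc Hfact].
  set (c := - Q / (G * Oss)) in Hc, Hfact.
  set (v := riccati_flow Oss c G p); set (u := affine_flow_back A Q p).
  assert (Hv : forall b, 0 <= b ->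
      is_derive v b (2 * A * v b + Q - G * v b ^ 2) /\ 0 < v b /\
      2 * A * v b + Q - G * v b ^ 2 < 0).
  { intros b Hb; destruct (riccati_flow_drift A Q G Oss c p b) as (Hd & Hab & Hneg);
      [lra .. | exact Hfact |].
    fold v in Hd, Hab, Hneg; split; [assumption | split; [lra | assumption]]. }
  assert (Hu : forall s, is_derive u s (- (2 * A * u s + Q)) /\ 0 < 2 * A * u s + Q)
    by (intros s; exact (affine_flow_back_spec A Q p s Hdrift)).
  assert (Hrange : forall T, 0 < T -> 0 <= beta T <= T) by (intros T HT; apply (Hbeta T HT)).
  assert (Hmatch : forall T, 0 < T -> v (beta T) = u (T - beta T))
    by (intros T HT; apply (is_beta_match A Q G Oss c g nrm rho p T); [lra | lra | auto ..]).
  split.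
  - exact (Derive_beta_pos A Q G v u beta HG (fun b Hb => proj1 (Hv b Hb))
      (fun b Hb => proj1 (proj2 (Hv b Hb))) (fun s => proj1 (Hu s)) (fun s => proj2 (Hu s))
      Hrange Hmatch Hderiv).
  - exact (Derive_beta_increasing A Q G v u beta HG HQ (fun b Hb => proj1 (Hv b Hb))
      (fun b Hb => proj1 (proj2 (Hv b Hb))) (fun b Hb => proj2 (proj2 (Hv b Hb)))
      (fun s => proj1 (Hu s)) (fun s => proj2 (Hu s)) Hrange Hmatch Hderiv).
Qed.
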